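(* Let $\mathcal{C},\mathcal{C}'$ be generalized categories. The following two conditions are equivalent, and if either holds then $\mathcal{C}$ and $\mathcal{C}'$ are equivalent (i.e. their categories of invertibles $\tilde{\mathcal{C}}$ and $\tilde{\mathcal{C}'}$ are isomorphic): (1) there are functors $F:\mathcal{C}\to\mathcal{C}'$ and $G:\mathcal{C}'\to\mathcal{C}$ such that the induced maps $\tilde F:\tilde{\mathcal{C}}\to\tilde{\mathcal{C}'}$ and $\tilde G:\tilde{\mathcal{C}'}\to\tilde{\mathcal{C}}$ are mutually inverse; (2) there are functors $F:\mathcal{C}\to\mathcal{C}'$ and $G:\mathcal{C}'\to\mathcal{C}$ with $F\circ G\cong\mathrm{id}_{\mathcal{C}'}$ and $G\circ F\cong\mathrm{id}_{\mathcal{C}}$.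
   Context: A generalized category is a tuple $(\mathcal{C},\le,s,t,\cdot)$ where $\mathcal{C}$ is a set, $\le$ a relation on $\mathcal{C}$, $s,t:\mathcal{C}\to\mathcal{C}$ maps (write $\bar a = s(a)$, $\hat a = t(a)$), and $\cdot$ a partially defined binary operation (write $ab$), such that: (1) $\le$ is a partial order; (2) $ab$ is defined iff $s(a)\le t(b)$; (3) if $(ab)c$ or $a(bc)$ is defined then $(ab)c=a(bc)$; (4) if $ab$ is defined then $s(ab)=s(b)$ and $t(ab)=t(a)$; (5) for every $a$ there is $b$ with $s(b)=t(b)=a$ such that $bc=c$ whenever $bc$ is defined and $cb=c$ whenever $cb$ is defined; this $b$ is unique, denoted $1_a$; (6) if $s(a)=t(a)=a$ then $ba=b$ whenever $ba$ is defined and $ab=b$ whenever $ab$ is defined; (7) if $a\le b$ then $s(a)\le s(b)$, $t(a)\le t(b)$ and $1_a\le 1_b$; and if $a\le b$, $c\le d$ and $ac,bd$ are defined then $ac\le bd$. A functor $F:\mathcal{C}\to\mathcal{D}$ is a map with $a\le b\Rightarrow F(a)\le F(b)$, $F(\bar a)=\overline{F(a)}$, $F(\hat a)=\widehat{F(a)}$, $F(ab)=F(a)F(b)$ whenever $ab$ is defined, and $F(1_a)=1_{F(a)}$. An element $a$ is invertible if there is $b$ with $ab=1_{\hat a}$, $ba=1_{\bar a}$. Write $a\sim b$ if there exist invertible $\theta_1,\theta_2$ with $\theta_1 a=b\theta_2$; $\tilde a$ denotes the $\sim$-class of $a$. The category of invertibles $\tilde{\mathcal{C}}$ is the set of $\sim$-classes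 with source $\tilde a\mapsto\widetilde{1_{\bar a}}$, target $\tilde a\mapsto\widetilde{1_{\hat a}}$, trivial order, and product $\tilde a\cdot\tilde b=\{\theta_1 a\theta_2 b\theta_3:\theta_i\text{ invertible},\ \theta_1a\theta_2b\theta_3\text{ defined}\}$; a functor $F$ induces $\tilde F(\tilde a):=\widetilde{F(a)}$. For functors $F,G:\mathcal{C}\to\mathcal{C}'$, $F\cong G$ means there exist maps $\theta_1,\theta_2:\mathcal{C}\to\mathcal{C}'$ with $\theta_1(a),\theta_2(a)$ invertible for all $a$ and $\theta_1(a)F(a)=G(a)\theta_2(a)$ (both sides defined) for all $a\in\mathcal{C}$. *)

Set Implicit Arguments.

Definition obind {A B : Type} (f : A -> option B) (o : option A) : option B :=
  match o with Some a => f a | None => None end.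

(** The identity [1_a]
    given by axiom (5) is recorded as the field [one]; axiom (5) is then
    split into existence ([one_*]) and uniqueness ([one_unique]). *)
Record GCat := {
  carrier :> Type;
  le : carrier -> carrier -> Prop;
  src : carrier -> carrier;
  tgt : carrier -> carrier;
  mul : carrier -> carrier -> option carrier;
  one : carrier -> carrier;
  le_refl : forall a, le a a;
  le_antisym : forall a b, le a b -> le b a -> a = b;
  le_trans : forall a b c, le a b -> le b c -> le a c;
  mul_defined : forall a b, mul a b <> None <-> le (src a) (tgt b);
  mul_assoc : forall a b c,
    obind (fun d => mul d c) (mul a b) <> None \/
    obind (fun d => mul a d) (mul b c) <> None ->
    obind (fun d => mul d c) (mul a b) = obind (fun d => mul a d) (mul b c);
  mul_src_tgt : forall a b ab, mul a b = Some ab -> src ab = src b /\ tgt ab = tgt a;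
  one_src : forall a, src (one a) = a;
  one_tgt : forall a, tgt (one a) = a;
  one_left : forall a c d, mul (one a) c = Some d -> d = c;
  one_right : forall a c d, mul c (one a) = Some d -> d = c;
  one_unique : forall a b, src b = a -> tgt b = a ->
    (forall c d, mul b c = Some d -> d = c) ->
    (forall c d, mul c b = Some d -> d = c) -> b = one a;
  obj_neutral : forall a, src a = a -> tgt a = a ->
    (forall b d, mul b a = Some d -> d = b) /\
    (forall b d, mul a b = Some d -> d = b);
  le_src_tgt_one : forall a b, le a b ->
    le (src a) (src b) /\ le (tgt a) (tgt b) /\ le (one a) (one b);
  le_mul : forall a b c d ac bd, le a b -> le c d ->
    mul a c = Some ac -> mul b d = Some bd -> le ac bd
}.

Arguments le {_}. Arguments src {_}. Arguments tgt {_}.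
Arguments mul {_}. Arguments one {_}.

Definition is_functor {C D : GCat} (F : C -> D) : Prop :=
  (forall a b, le a b -> le (F a) (F b)) /\
  (forall a, F (src a) = src (F a)) /\
  (forall a, F (tgt a) = tgt (F a)) /\
  (forall a b ab, mul a b = Some ab -> mul (F a) (F b) = Some (F ab)) /\
  (forall a, F (one a) = one (F a)).

Definition invertible {C : GCat} (a : C) : Prop :=
  exists b : C, mul a b = Some (one (tgt a)) /\ mul b a = Some (one (src a)).

Definition sim {C : GCat} (a b : C) : Prop :=
  exists th1 th2 x : C, invertible th1 /\ invertible th2 /\
    mul th1 a = Some x /\ mul b th2 = Some x.

Definition cls {C : GCat} (a : C) : C -> Prop := fun b => sim a b.

Definition is_class {C : GCat} (X : C -> Prop) : Prop := exists a : C, X = cls a.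

(** Structure of the category of invertibles ~C (order is trivial). *)
Definition tsrc {C : GCat} (X : C -> Prop) : C -> Prop :=
  fun y => exists a : C, X a /\ sim (one (src a)) y.
Definition ttgt {C : GCat} (X : C -> Prop) : C -> Prop :=
  fun y => exists a : C, X a /\ sim (one (tgt a)) y.

(** theta1 a theta2 b theta3 (left-nested; associativity makes nesting irrelevant). *)
Definition mul5 {C : GCat} (x1 x2 x3 x4 x5 : C) : option C :=
  obind (fun u => mul u x5)
    (obind (fun u => mul u x4)
      (obind (fun u => mul u x3) (mul x1 x2))).

Definition tprod {C : GCat} (X Y : C -> Prop) : C -> Prop :=
  fun z => exists a b th1 th2 th3 : C, X a /\ Y b /\
    invertible th1 /\ invertible th2 /\ invertible th3 /\
    mul5 th1 a th2 b th3 = Some z.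

Definition tmap {C D : GCat} (F : C -> D) (X : C -> Prop) : D -> Prop :=
  fun y => exists a : C, X a /\ sim (F a) y.

(** Isomorphism of the categories of invertibles ~C and ~D: mutually
    inverse maps between the sets of classes, preserving source, target
    and the product (the product of two classes being a union of classes,
    it is described by which classes it contains). *)
Definition tiso (C D : GCat) : Prop :=
  exists (Phi : (C -> Prop) -> (D -> Prop)) (Psi : (D -> Prop) -> (C -> Prop)),
    (forall X, is_class X -> is_class (Phi X) /\ Psi (Phi X) = X) /\
    (forall Y, is_class Y -> is_class (Psi Y) /\ Phi (Psi Y) = Y) /\
    (forall X, is_class X -> Phi (tsrc X) = tsrc (Phi X)) /\
    (forall X, is_class X -> Phi (ttgt X) = ttgt (Phi X)) /\
    (forall X Y Z, is_class X -> is_class Y -> is_class Z ->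
       ((forall z, Z z -> tprod X Y z) <->
        (forall z, Phi Z z -> tprod (Phi X) (Phi Y) z))).

Definition fun_iso {C D : GCat} (F G : C -> D) : Prop :=
  exists th1 th2 : C -> D,
    (forall a, invertible (th1 a)) /\ (forall a, invertible (th2 a)) /\
    (forall a, exists x, mul (th1 a) (F a) = Some x /\ mul (G a) (th2 a) = Some x).

Definition cond1 (C D : GCat) : Prop :=
  exists (F : C -> D) (G : D -> C), is_functor F /\ is_functor G /\
    (forall X, is_class X -> tmap G (tmap F X) = X) /\
    (forall Y, is_class Y -> tmap F (tmap G Y) = Y).

Definition cond2 (C D : GCat) : Prop :=
  exists (F : C -> D) (G : D -> C), is_functor F /\ is_functor G /\
    fun_iso (fun y => F (G y)) (fun y => y) /\
    fun_iso (fun x => G (F x)) (fun x => x).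

(** Similar elements have the same class, and functors preserve similarity,
    so the induced map sends the class of [a] to the class of [F a].  Hence [~G (~F X) = X] for all classes
    [X] says exactly that [G (F a) ~ a] for every [a], and choosing the
    witnesses of these similarities uniformly in [a] is a natural isomorphism
    [G F ≅ id]; symmetrically for [F G].  The functors then induce mutually
    inverse maps on classes, which commute with source and target because
    functors preserve identities, and which preserve products because the
    product of two classes is closed under [~] and functors map the five-fold
    products defining it to five-fold products. *)

From Stdlib Require Import FunctionalExtensionality PropExtensionality
  IndefiniteDescription.

Section GCatTheory.

Context {C : GCat}.
Implicit Types a b c x y z t u v : C.

(* Axiom (5) makes the order discrete: when [x <= y] the product [1_x 1_y] is
   defined, equals [1_y], and has target [x]. *)
Lemma le_discrete x y : le x y -> x = y.
Proof.
  intro Hxy. destruct (mul (one x) (one y)) as [d|] eqn:E.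
  - pose proof (one_left _ _ _ E) as Hd. subst d.
    destruct (mul_src_tgt _ _ _ E) as [_ Ht]. rewrite !one_tgt in Ht. congruence.
  - exfalso. apply (proj2 (mul_defined _ (one x) (one y))); [|exact E].
    rewrite one_src, one_tgt. exact Hxy.
Qed.

Lemma mul_some_src_tgt {a b ab} : mul a b = Some ab -> src a = tgt b.
Proof. intro E. apply le_discrete, (mul_defined _ a b). congruence. Qed.

Lemma mul_total a b : src a = tgt b -> exists ab, mul a b = Some ab.
Proof.
  intro H. destruct (mul a b) as [ab|] eqn:E; [eauto|exfalso].
  apply (proj2 (mul_defined _ a b)); [rewrite H; apply le_refl | exact E].
Qed.

Lemma mul_one_l a : mul (one (tgt a)) a = Some a.
Proof.
  destruct (mul_total (one (tgt a)) a) as [d E]; [apply one_src|].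
  rewrite E. f_equal. exact (one_left _ _ _ E).
Qed.

Lemma mul_one_r a : mul a (one (src a)) = Some a.
Proof.
  destruct (mul_total a (one (src a))) as [d E]; [symmetry; apply one_tgt|].
  rewrite E. f_equal. exact (one_right _ _ _ E).
Qed.

Lemma mul_assoc_lr {a b c ab r} :
  mul a b = Some ab -> mul ab c = Some r -> exists bc, mul b c = Some bc /\ mul a bc = Some r.
Proof.
  intros E1 E2. pose proof (mul_assoc _ a b c) as H. rewrite E1 in H. simpl in H.
  rewrite E2 in H. specialize (H (or_introl (ltac:(discriminate) : Some r <> None))).
  destruct (mul b c) as [bc|]; simpl in H; [eauto | discriminate].
Qed.

Lemma mul_assoc_rl {a b c bc r} :
  mul b c = Some bc -> mul a bc = Some r -> exists ab, mul a b = Some ab /\ mul ab c = Some r.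
Proof.
  intros E1 E2. pose proof (mul_assoc _ a b c) as H. rewrite E1 in H. simpl in H.
  rewrite E2 in H. specialize (H (or_intror (ltac:(discriminate) : Some r <> None))).
  destruct (mul a b) as [ab|]; simpl in H; [eauto | discriminate].
Qed.

Lemma invertible_one x : invertible (one x).
Proof.
  exists (one x). pose proof (mul_one_l (one x)) as h. rewrite one_tgt in h.
  rewrite one_tgt, one_src. split; exact h.
Qed.

Lemma invertible_inverse {t t'} :
  mul t t' = Some (one (tgt t)) -> mul t' t = Some (one (src t)) -> invertible t'.
Proof.
  intros H1 H2. exists t.
  destruct (mul_src_tgt _ _ _ H1) as [s _]. rewrite one_src in s.
  destruct (mul_src_tgt _ _ _ H2) as [_ e]. rewrite one_tgt in e.
  rewrite <- s, <- e. split; assumption.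
Qed.

(* The inverse of [u v] is [v' u'], computed by cancelling the middle factors. *)
Lemma invertible_mul {u v uv} : invertible u -> invertible v -> mul u v = Some uv -> invertible uv.
Proof.
  intros [u' [Hu1 Hu2]] [v' [Hv1 Hv2]] E.
  destruct (mul_src_tgt _ _ _ E) as [s_uv t_uv].
  destruct (mul_total v' u') as [w Ew].
  { rewrite (mul_some_src_tgt Hv2), <- (mul_some_src_tgt E).
    exact (mul_some_src_tgt Hu1). }
  exists w. split.
  - assert (Hm : mul (one (tgt v)) u' = Some u').
    { destruct (mul_src_tgt _ _ _ Hu2) as [_ e]. rewrite one_tgt in e.
      rewrite <- (mul_some_src_tgt E), e. apply mul_one_l. }
    destruct (mul_assoc_lr Hv1 Hm) as [vu' [B1 B2]].
    rewrite Ew in B1. injection B1 as <-.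
    destruct (mul_assoc_rl B2 Hu1) as [uv' [A1 A2]].
    rewrite E in A1. injection A1 as <-. rewrite t_uv. exact A2.
  - assert (Hm : mul (one (src u)) v = Some v).
    { rewrite (mul_some_src_tgt E). apply mul_one_l. }
    destruct (mul_assoc_lr Hu2 Hm) as [uv' [B1 B2]].
    rewrite E in B1. injection B1 as <-.
    destruct (mul_assoc_rl B2 Hv2) as [w' [A1 A2]].
    rewrite Ew in A1. injection A1 as <-. rewrite s_uv. exact A2.
Qed.

Lemma sim_refl a : sim a a.
Proof.
  exists (one (tgt a)), (one (src a)), a.
  repeat split; [apply invertible_one | apply invertible_one | apply mul_one_l | apply mul_one_r].
Qed.

(* From [t1 a = b t2] one gets [t1' b = a t2'] by multiplying with the inverses. *)
Lemma sim_sym {a b} : sim a b -> sim b a.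
Proof.
  intros [t1 [t2 [x [[t1' [I1 I1']] [[t2' [I2 I2']] [E1 E2]]]]]].
  assert (Ha : mul (one (src t1)) a = Some a).
  { rewrite (mul_some_src_tgt E1). apply mul_one_l. }
  destruct (mul_assoc_lr I1' Ha) as [x' [B1 B2]].
  rewrite E1 in B1. injection B1 as <-.
  destruct (mul_assoc_rl E2 B2) as [p [P1 P2]].
  assert (Hp : mul p (one (tgt t2)) = Some p).
  { rewrite <- (mul_some_src_tgt P2). apply mul_one_r. }
  destruct (mul_assoc_rl I2 Hp) as [q [Q1 Q2]].
  rewrite P2 in Q1. injection Q1 as <-.
  exists t1', t2', p.
  split; [exact (invertible_inverse I1 I1')|].
  split; [exact (invertible_inverse I2 I2')|].
  split; assumption.
Qed.

Lemma sim_trans {a b c} : sim a b -> sim b c -> sim a c.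
Proof.
  intros [t1 [t2 [x [J1 [J2 [E1 E2]]]]]] [s1 [s2 [y [K1 [K2 [F1 F2]]]]]].
  destruct (mul_total y t2) as [r R].
  { destruct (mul_src_tgt _ _ _ F1) as [e _]. rewrite e. exact (mul_some_src_tgt E2). }
  destruct (mul_assoc_lr F1 R) as [bt [B1 B2]].
  rewrite E2 in B1. injection B1 as <-.
  destruct (mul_assoc_rl E1 B2) as [u [U1 U2]].
  destruct (mul_assoc_lr F2 R) as [v [V1 V2]].
  exists u, v, r.
  split; [exact (invertible_mul K1 J1 U1)|].
  split; [exact (invertible_mul K2 J2 V1)|].
  split; assumption.
Qed.

Lemma cls_sim a b : sim a b -> cls a = cls b.
Proof.
  intro H. extensionality y. apply propositional_extensionality. split; intro K.
  - exact (sim_trans (sim_sym H) K).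
  - exact (sim_trans H K).
Qed.

Lemma sim_one_src_one_tgt {t} : invertible t -> sim (one (src t)) (one (tgt t)).
Proof. intro I. exists t, t, t. repeat split; [exact I | exact I | apply mul_one_r | apply mul_one_l]. Qed.

Lemma sim_one_src {a b} : sim a b -> sim (one (src a)) (one (src b)).
Proof.
  intros [t1 [t2 [x [J1 [J2 [E1 E2]]]]]].
  destruct (mul_src_tgt _ _ _ E1) as [s1 _]. destruct (mul_src_tgt _ _ _ E2) as [s2 _].
  rewrite (mul_some_src_tgt E2), <- s1, s2. exact (sim_one_src_one_tgt J2).
Qed.

Lemma sim_one_tgt {a b} : sim a b -> sim (one (tgt a)) (one (tgt b)).
Proof.
  intros [t1 [t2 [x [J1 [J2 [E1 E2]]]]]].
  destruct (mul_src_tgt _ _ _ E1) as [_ t_1]. destruct (mul_src_tgt _ _ _ E2) as [_ t_2].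
  rewrite <- (mul_some_src_tgt E1), <- t_2, t_1. exact (sim_one_src_one_tgt J1).
Qed.

Lemma tsrc_cls a : tsrc (cls a) = cls (one (src a)).
Proof.
  extensionality y. apply propositional_extensionality. split.
  - intros [a' [K1 K2]]. exact (sim_trans (sim_one_src K1) K2).
  - intro K. exists a. split; [apply sim_refl | exact K].
Qed.

Lemma ttgt_cls a : ttgt (cls a) = cls (one (tgt a)).
Proof.
  extensionality y. apply propositional_extensionality. split.
  - intros [a' [K1 K2]]. exact (sim_trans (sim_one_tgt K1) K2).
  - intro K. exists a. split; [apply sim_refl | exact K].
Qed.

Lemma mul5_some {x1 x2 x3 x4 x5 z} : mul5 x1 x2 x3 x4 x5 = Some z ->
  exists p1 p2 p3, mul x1 x2 = Some p1 /\ mul p1 x3 = Some p2 /\ mul p2 x4 = Some p3 /\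
    mul p3 x5 = Some z.
Proof.
  unfold mul5. destruct (mul x1 x2) as [p1|] eqn:E1; simpl; [|discriminate].
  destruct (mul p1 x3) as [p2|] eqn:E2; simpl; [|discriminate].
  destruct (mul p2 x4) as [p3|] eqn:E3; simpl; [|discriminate].
  intro E4. exists p1, p2, p3. auto.
Qed.

Lemma mul5_of_mul {x1 x2 x3 x4 x5 p1 p2 p3 z} :
  mul x1 x2 = Some p1 -> mul p1 x3 = Some p2 -> mul p2 x4 = Some p3 ->
  mul p3 x5 = Some z -> mul5 x1 x2 x3 x4 x5 = Some z.
Proof. unfold mul5. intros -> ; simpl. intros ->; simpl. intros ->; simpl. exact id. Qed.

(* If [z = t1 a t2 b t3] and [s1 z = w s2], then [w = (s1 t1) a t2 b (t3 s2')]. *)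
Lemma tprod_sim {X Y z w} : tprod X Y z -> sim z w -> tprod X Y w.
Proof.
  intros [a [b [t1 [t2 [t3 [Xa [Yb [I1 [I2 [I3 M]]]]]]]]]]
    [s1 [s2 [x [J1 [[s2' [J2 J2']] [E1 E2]]]]]].
  destruct (mul5_some M) as [p1 [p2 [p3 [M1 [M2 [M3 M4]]]]]].
  destruct (mul_assoc_rl M4 E1) as [q3 [Q3 Q3']].
  destruct (mul_assoc_rl M3 Q3) as [q2 [Q2 Q2']].
  destruct (mul_assoc_rl M2 Q2) as [q1 [Q1 Q1']].
  destruct (mul_assoc_rl M1 Q1) as [u [U1 U2]].
  assert (Hw : mul w (one (tgt s2)) = Some w).
  { rewrite <- (mul_some_src_tgt E2). apply mul_one_r. }
  destruct (mul_assoc_rl J2 Hw) as [x' [A1 A2]].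
  rewrite E2 in A1. injection A1 as <-.
  destruct (mul_assoc_lr Q3' A2) as [v [V1 V2]].
  exists a, b, u, t2, v.
  do 2 (split; [assumption|]).
  split; [exact (invertible_mul J1 I1 U1)|].
  split; [exact I2|].
  split; [exact (invertible_mul I3 (invertible_inverse J2 J2') V1)|].
  exact (mul5_of_mul U2 Q1' Q2' V2).
Qed.

End GCatTheory.

Section Functor.

Context {C D : GCat} {F : C -> D} (hF : is_functor F).

Lemma functor_src a : F (src a) = src (F a).
Proof. apply hF. Qed.

Lemma functor_tgt a : F (tgt a) = tgt (F a).
Proof. apply hF. Qed.

Lemma functor_mul {a b ab} : mul a b = Some ab -> mul (F a) (F b) = Some (F ab).
Proof. apply hF. Qed.

Lemma functor_one a : F (one a) = one (F a).
Proof. apply hF. Qed.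

Lemma functor_invertible t : invertible t -> invertible (F t).
Proof.
  intros [t' [T1 T2]]. exists (F t'). split.
  - rewrite (functor_mul T1), functor_one, functor_tgt. reflexivity.
  - rewrite (functor_mul T2), functor_one, functor_src. reflexivity.
Qed.

Lemma functor_sim {a b} : sim a b -> sim (F a) (F b).
Proof.
  intros [t1 [t2 [x [J1 [J2 [E1 E2]]]]]].
  exists (F t1), (F t2), (F x).
  repeat split; [apply functor_invertible; assumption | apply functor_invertible; assumption
                 | exact (functor_mul E1) | exact (functor_mul E2)].
Qed.

Lemma tmap_cls a : tmap F (cls a) = cls (F a).
Proof.
  extensionality y. apply propositional_extensionality. split.
  - intros [a' [K1 K2]]. exact (sim_trans (functor_sim K1) K2).
  - intro K. exists a. split; [apply sim_refl | exact K].
Qed.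

Lemma tmap_is_class {X} : is_class X -> is_class (tmap F X).
Proof. intros [a ->]. exists (F a). apply tmap_cls. Qed.

Lemma tmap_tsrc X : is_class X -> tmap F (tsrc X) = tsrc (tmap F X).
Proof. intros [a ->]. rewrite tsrc_cls, !tmap_cls, tsrc_cls, functor_one, functor_src. reflexivity. Qed.

Lemma tmap_ttgt X : is_class X -> tmap F (ttgt X) = ttgt (tmap F X).
Proof. intros [a ->]. rewrite ttgt_cls, !tmap_cls, ttgt_cls, functor_one, functor_tgt. reflexivity. Qed.

Lemma tprod_tmap {X Y z} : tprod X Y z -> tprod (tmap F X) (tmap F Y) (F z).
Proof.
  intros [a [b [t1 [t2 [t3 [Xa [Yb [I1 [I2 [I3 M]]]]]]]]]].
  destruct (mul5_some M) as [p1 [p2 [p3 [M1 [M2 [M3 M4]]]]]].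
  exists (F a), (F b), (F t1), (F t2), (F t3).
  split; [exists a; split; [exact Xa | apply sim_refl]|].
  split; [exists b; split; [exact Yb | apply sim_refl]|].
  do 3 (split; [apply functor_invertible; assumption|]).
  exact (mul5_of_mul (functor_mul M1) (functor_mul M2) (functor_mul M3) (functor_mul M4)).
Qed.

Lemma tmap_sub_tprod {X Y Z} : (forall z, Z z -> tprod X Y z) ->
  forall w, tmap F Z w -> tprod (tmap F X) (tmap F Y) w.
Proof. intros HZ w [z [Zz S]]. exact (tprod_sim (tprod_tmap (HZ z Zz)) S). Qed.

End Functor.

Lemma fun_iso_iff_sim (C D : GCat) (F G : C -> D) : fun_iso F G <-> forall a, sim (F a) (G a).
Proof.
  split.
  - intros [t1 [t2 [I1 [I2 E]]]] a. destruct (E a) as [x [E1 E2]].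
    exists (t1 a), (t2 a), x. auto.
  - intro H.
    destruct (functional_choice (fun a (p : D * D) => invertible (fst p) /\ invertible (snd p) /\
       exists x, mul (fst p) (F a) = Some x /\ mul (G a) (snd p) = Some x)) as [f Hf].
    { intro a. destruct (H a) as [t1 [t2 [x [I1 [I2 E]]]]]. exists (t1, t2). simpl. eauto. }
    exists (fun a => fst (f a)), (fun a => snd (f a)).
    split; [intro a; apply (Hf a)|]. split; intro a; apply (Hf a).
Qed.

Lemma tmap_tmap_id_iff {C D : GCat} {F : C -> D} {G : D -> C} :
  is_functor F -> is_functor G ->
  (forall X, is_class X -> tmap G (tmap F X) = X) <-> forall a, sim (G (F a)) a.
Proof.
  intros hF hG. split.
  - intros H a. specialize (H (cls a) (ex_intro _ a eq_refl)).
    rewrite (tmap_cls hF), (tmap_cls hG) in H.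
    change (cls (G (F a)) a). rewrite H. apply sim_refl.
  - intros H X [a ->]. rewrite (tmap_cls hF), (tmap_cls hG). apply cls_sim, H.
Qed.

Theorem mainTheorem9 (C D : GCat) :
  (cond1 C D <-> cond2 C D) /\ (cond1 C D -> tiso C D).
Proof.
  split; [split|].
  - intros [F [G [hF [hG [hGF hFG]]]]]. exists F, G.
    rewrite !fun_iso_iff_sim.
    rewrite (tmap_tmap_id_iff hF hG) in hGF. rewrite (tmap_tmap_id_iff hG hF) in hFG.
    auto.
  - intros [F [G [hF [hG [hFG hGF]]]]]. exists F, G.
    rewrite fun_iso_iff_sim in hFG, hGF.
    rewrite (tmap_tmap_id_iff hF hG), (tmap_tmap_id_iff hG hF). auto.
  - intros [F [G [hF [hG [hGF hFG]]]]]. exists (tmap F), (tmap G).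
    split; [intros X HX; exact (conj (tmap_is_class hF HX) (hGF X HX))|].
    split; [intros Y HY; exact (conj (tmap_is_class hG HY) (hFG Y HY))|].
    split; [exact (tmap_tsrc hF)|].
    split; [exact (tmap_ttgt hF)|].
    intros X Y Z HX HY HZ. split; intro Hsub.
    + exact (tmap_sub_tprod hF Hsub).
    + rewrite <- (hGF X), <- (hGF Y), <- (hGF Z) by assumption.
      exact (tmap_sub_tprod hG Hsub).
Qed.
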